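(* Let $N,d_h,d_e\ge1$ and let $\mathcal{M}$ be the space of triples $\mathbf{Z}=(\mathbf{X},\mathbf{H},\mathbf{A})$ with $\mathbf{X}\in\mathbb{R}^{N\times 3}$ zero-centered (rows sum to zero), $\mathbf{H}\in\mathbb{R}^{N\times d_h}$, $\mathbf{A}\in\mathbb{R}^{N\times N\times d_e}$. Let $\mathcal{G}=SO(3)\times S_N$ act by $(R,\pi)\cdot(\mathbf{X},\mathbf{H},\mathbf{A})=(\pi(\mathbf{X})R^\top,\pi(\mathbf{H}),\pi(\mathbf{A}))$, where $\pi$ permutes rows of $\mathbf{X},\mathbf{H}$ and simultaneously rows and columns of $\mathbf{A}$, and let $\lambda$ be the Haar probability measure on $\mathcal{G}$. Let $\mu$ be a $\mathcal{G}$-invariant probability measure on $\mathcal{M}$ under which the stabilizer $\{g:g\cdot\mathbf{Z}=\mathbf{Z}\}$ is trivial almost surely. Let $\Psi:\mathcal{M}\to\mathcal{M}$ be a measurable canonicalization map ($\Psi(\mathbf{Z})$ lies in the orbit of $\mathbf{Z}$ and $\Psi(g\cdot\mathbf{Z})=\Psi(\mathbf{Z})$ for all $g$), defined $\mu$-a.s., with slice $S=\Psi(\mathcal{M})$, and let $\nu:=\Psi_{\#}\mu$. Let $\varepsilon>0$ and let $\hat\mu_{\mathrm{eq}}$ be a $\mathcal{G}$-invariant probability measure on $\mathcal{M}$ (the output of an equivariant baseline model) with $\mathrm{TV}(\hat\mu_{\mathrm{eq}},\mu)<\varepsilon$, and set $\hat\nu_{\mathrm{eq}}:=\Psi_{\#}\hat\mu_{\mathrm{eq}}$.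 Let $\{\hat\nu_\theta\}_\theta$ be a family of probability measures on $S$ such that $$\inf_\theta \mathrm{TV}(\hat\nu_\theta,\nu)\le\mathrm{TV}(\hat\nu_{\mathrm{eq}},\nu).$$ Then there exists $\theta$ such that the Haar-randomized model $$\hat\mu_\theta:=\int_S\Big(\int_{\mathcal{G}}\delta_{g\cdot\mathbf{Z}}\,d\lambda(g)\Big)\,d\hat\nu_\theta(\mathbf{Z})$$ satisfies $\mathrm{TV}(\hat\mu_\theta,\mu)<\varepsilon$.
   Context: $\mathrm{TV}$ denotes total variation distance; $\Psi_{\#}\mu$ denotes the pushforward measure. *)

From HB Require Import structures.
From mathcomp Require Import all_boot all_order all_algebra all_fingroup.
From mathcomp Require Import all_classical all_reals all_analysis.

Set Implicit Arguments.
Unset Strict Implicit.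
Unset Printing Implicit Defensive.

Import Order.TTheory GRing.Theory Num.Theory.
Local Open Scope classical_set_scope.
Local Open Scope ring_scope.

Section Setting.
Variables (R : realType) (N dh de : nat).

Definition zero_centered (X : 'M[R]_(N, 3)) : bool :=
  [forall j : 'I_3, \sum_(i < N) X i j == 0].

Record mol := Mol {
  molX : 'M[R]_(N, 3);
  molH : 'M[R]_(N, dh);
  molA : 'I_N -> 'I_N -> 'I_de -> R;
  molX_centered : zero_centered molX }.

Lemma zero_centered0 : zero_centered 0.
Proof. by apply/forallP => j; apply/eqP; apply: big1 => i _; rewrite mxE. Qed.

HB.instance Definition _ := gen_eqMixin mol.
HB.instance Definition _ := gen_choiceMixin mol.
HB.instance Definition _ :=
  isPointed.Build mol (@Mol 0 0 (fun _ _ _ => 0) zero_centered0).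

(* Borel (= product) sigma-algebra: generated by the coordinate maps. *)
Definition mol_gen : set (set mol) :=
  [set B | (exists (i : 'I_N) (j : 'I_3) (U : set R),
              measurable U /\ B = [set Z | U (molX Z i j)])
        \/ (exists (i : 'I_N) (k : 'I_dh) (U : set R),
              measurable U /\ B = [set Z | U (molH Z i k)])
        \/ (exists (i j : 'I_N) (k : 'I_de) (U : set R),
              measurable U /\ B = [set Z | U (molA Z i j k)])].

Definition M := g_sigma_algebraType mol_gen.

Record SO3 := MkSO3 {
  rotm :> 'M[R]_3;
  rotmP : (rotm *m rotm^T == 1%:M) && (\det rotm == 1) }.

Lemma so3_oneP : ((1%:M : 'M[R]_3) *m (1%:M)^T == 1%:M) && (\det (1%:M : 'M[R]_3) == 1).
Proof. by rewrite trmx1 mulmx1 det1 !eqxx. Qed.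

Definition so3_one : SO3 := MkSO3 so3_oneP.

Lemma so3_mulP (a b : SO3) :
  ((a *m b) *m (a *m b)^T == 1%:M) && (\det (a *m b) == 1).
Proof.
move: a b => [a /andP[/eqP ha /eqP da]] [b /andP[/eqP hb /eqP db]] /=.
rewrite trmx_mul mulmxA -(mulmxA a) hb mulmx1 ha eqxx /=.
by rewrite det_mulmx da db mulr1 eqxx.
Qed.

Definition so3_mul (a b : SO3) : SO3 := MkSO3 (so3_mulP a b).

Definition gcar := (SO3 * {perm 'I_N})%type.

HB.instance Definition _ := gen_eqMixin gcar.
HB.instance Definition _ := gen_choiceMixin gcar.
HB.instance Definition _ := isPointed.Build gcar (so3_one, 1%g).

(* Borel sigma-algebra of the compact group SO(3) x S_N
   (S_N discrete): generated by matrix entries and the permutation. *)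
Definition grp_gen : set (set gcar) :=
  [set B | (exists (i j : 'I_3) (U : set R),
              measurable U /\ B = [set g : gcar | U ((g.1 : 'M[R]_3) i j)])
        \/ (exists s : {perm 'I_N}, B = [set g : gcar | g.2 = s])].

Definition G := g_sigma_algebraType grp_gen.

Definition gone : G := (so3_one, 1%g).
Definition gmul (g h : G) : G := (so3_mul g.1 h.1, (g.2 * h.2)%g).

(* The action (R, pi) . (X, H, A) = (pi(X) R^T, pi(H), pi(A)),         *)
(* with (pi Y)_i = Y_{pi^-1 i} (rows; rows and columns for A).         *)

Lemma act_centered (r : 'M[R]_3) (p : {perm 'I_N}) (X : 'M[R]_(N, 3)) :
  zero_centered X -> zero_centered (\matrix_(i, j) (X *m r^T) (p i) j).
Proof.
move=> /forallP hX; apply/forallP => j; apply/eqP.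
under eq_bigr do rewrite mxE.
rewrite (reindex_inj (@perm_inj _ p^-1)) /=.
under eq_bigr do rewrite permKV mxE.
rewrite exchange_big /=.
apply: big1 => k _.
by rewrite -big_distrl /= (eqP (hX k)) mul0r.
Qed.

Definition mol_act (g : G) (Z : M) : M :=
  @Mol (\matrix_(i, j) (molX Z *m (g.1 : 'M[R]_3)^T) ((g.2)^-1%g i) j)
       (\matrix_(i, k) molH Z ((g.2)^-1%g i) k)
       (fun i j k => molA Z ((g.2)^-1%g i) ((g.2)^-1%g j) k)
       (act_centered (g.1 : 'M[R]_3) (g.2)^-1%g (molX_centered Z)).

(* Haar probability measure on the compact group G: a left-invariant
   probability measure, lam (g B) = lam B; stated with preimages
   (g B = (gmul g^-1)^-1 B). *)
Definition left_invariant (lam : set G -> \bar R) : Prop :=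
  forall (g : G) (B : set G), measurable B -> lam (gmul g @^-1` B) = lam B.

Definition G_invariant (m : set M -> \bar R) : Prop :=
  forall (g : G) (A : set M), measurable A -> m (mol_act g @^-1` A) = m A.

(* Haar-randomized model: A |-> \int_Z (\int_G delta_{g.Z}(A) dlam(g)) dnu(Z). *)
Definition haar_randomize (lam : set G -> \bar R)
  (nu : {measure set M -> \bar R}) : set M -> \bar R :=
  fun A => (\int[nu]_(Z in setT) lam [set g | A (mol_act g Z)])%E.

End Setting.

Definition TV d (T : measurableType d) (R : realType) (P Q : set T -> \bar R)
  : \bar R := ereal_sup [set (`|P A - Q A|)%E | A in measurable].

Arguments gone {R N}.
Arguments mol_act {R N dh de}.
Arguments left_invariant {R N}.
Arguments G_invariant {R N dh de}.
Arguments haar_randomize {R N dh de}.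

(* Haar randomization is a Markov kernel, and so is pushforward by a
   measurable map; both contract the total variation distance.  Moreover [mu]
   is the Haar randomization of [Psi # mu]: by invariance and Fubini,
   mu A = \int lam {g | g.Z \in A} dmu(Z), and since Psi Z lies in the orbit
   of Z, replacing Z by Psi Z does not change lam {g | g.Z \in A}.  The last
   step needs right invariance of [lam], which follows from its invariance
   under inversion, once more by Fubini.  Hence
   TV(mu_theta, mu) <= TV(nu_theta, Psi # mu), while
   TV(Psi # mu_eq, Psi # mu) <= TV(mu_eq, mu) < eps, so a nearly optimal theta
   gives the claim. *)

From HB Require Import structures.
From mathcomp Require Import all_boot all_order all_algebra all_fingroup.
From mathcomp Require Import all_classical all_reals all_analysis.
From mathcomp Require Import measurable_realfun.

Set Implicit Arguments.
Unset Strict Implicit.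
Unset Printing Implicit Defensive.

Import Order.TTheory GRing.Theory Num.Theory.
Local Open Scope classical_set_scope.
Local Open Scope ring_scope.

Lemma measurable_preimage d1 d2 (T1 : measurableType d1) (T2 : measurableType d2)
  (f : T1 -> T2) (B : set T2) :
  measurable_fun setT f -> measurable B -> measurable (f @^-1` B).
Proof. by move=> mf mB; rewrite -[X in measurable X]setTI; exact: mf. Qed.

Section finite_valued_map.
Context d (T : measurableType d) (F : finType) (q : T -> F).
Hypothesis mq : forall s, measurable (q @^-1` [set s]).

Lemma measurable_finite_preimage (S : set F) : measurable (q @^-1` S).
Proof.
have -> : q @^-1` S = \bigcup_(s in S) q @^-1` [set s].
  by apply/seteqP; split => [x Sx | x [s Ss /= ->]] //; exists (q x).
by apply: fin_bigcup_measurable => //; exact: finite_finset.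
Qed.

Lemma measurable_fun_finite_cases d' (T' : measurableType d')
    (f : T -> T') (fs : F -> T -> T') :
  (forall s, measurable_fun setT (fs s)) -> (forall x, f x = fs (q x) x) ->
  measurable_fun setT f.
Proof.
move=> mfs fE _ Y mY; rewrite setTI.
have -> : f @^-1` Y = \bigcup_(s in setT) (q @^-1` [set s] `&` fs s @^-1` Y).
  apply/seteqP; split => [x /= Yx | x [s _ [/= <-]]]; last by rewrite /= fE.
  by exists (q x) => //; split => //=; rewrite -fE.
apply: fin_bigcup_measurable; first exact: finite_finset.
by move=> s _; apply: measurableI => //; exact: measurable_preimage.
Qed.

End finite_valued_map.

Section section_integrals.
Local Open Scope ereal_scope.
Context d1 d2 (T1 : measurableType d1) (T2 : measurableType d2) (R : realType).

Lemma integral_xsection_ysection (m1 : {sigma_finite_measure set T1 -> \bar R})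
    (m2 : {sigma_finite_measure set T2 -> \bar R}) (W : set (T1 * T2)) :
  measurable W ->
  \int[m1]_x m2 (xsection W x) = \int[m2]_y m1 (ysection W y).
Proof.
move=> mW; apply: (@product_measure_unique _ _ _ _ _ m1 m2 (m1 \x^ m2) _ W mW).
by move=> A B mA mB; exact: product_measure2E.
Qed.

Lemma integrable_probability_xsection (m1 : {finite_measure set T1 -> \bar R})
    (P : probability T2 R) (W : set (T1 * T2)) :
  measurable W -> m1.-integrable setT (fun x => P (xsection W x)).
Proof.
move=> mW; apply: (@le_integrable _ _ _ m1 _ measurableT _ (EFin \o cst 1%R)).
- exact: measurable_fun_xsection.
- move=> x _; rewrite /= gee0_abs // normr1.
  exact/probability_le1/measurable_xsection.
- exact: finite_measure_integrable_cst.
Qed.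

End section_integrals.

Section probability_integral.
Local Open Scope ereal_scope.
Context d (T : measurableType d) (R : realType) (P : probability T R).

Lemma integral_cst_probability (c : \bar R) : \int[P]_x c = c.
Proof.
have -> := integral_cst P measurableT c.
by rewrite -[RHS]mule1; congr (_ * _); exact: probability_setT.
Qed.

Lemma abse_integralB_le (f g : T -> \bar R) (c : \bar R) :
  P.-integrable setT f -> P.-integrable setT g ->
  (forall x, `|f x - g x| <= c) ->
  `|\int[P]_x f x - \int[P]_x g x| <= c.
Proof.
move=> intf intg fgc.
have mfg : measurable_fun setT (f \- g).
  by apply: emeasurable_funB; [exact: measurable_int intf|exact: measurable_int intg].
rewrite -integralB // (le_trans (le_abse_integral _ _ mfg)) //.
rewrite -[leRHS]integral_cst_probability.
by apply: ge0_le_integral => //; exact: measurableT_comp.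
Qed.

End probability_integral.

Lemma TV_pushforward_le d1 d2 (T1 : measurableType d1) (T2 : measurableType d2)
    (R : realType) (P Q : set T1 -> \bar R) (f : T1 -> T2) :
  measurable_fun setT f ->
  (TV (pushforward P f) (pushforward Q f) <= TV P Q)%E.
Proof.
move=> mf; apply: ereal_sup_le => _ [A mA <-].
by exists (f @^-1` A) => //; exact: measurable_preimage.
Qed.

Lemma eq_TVr d (T : measurableType d) (R : realType) (P Q Q' : set T -> \bar R) :
  (forall A, measurable A -> Q A = Q' A) -> TV P Q = TV P Q'.
Proof.
by move=> QQ'; congr ereal_sup; apply: eq_imagel => A mA; rewrite QQ'.
Qed.

Section left_invariant_probability.
Local Open Scope ereal_scope.
Context d (T : measurableType d) (R : realType).
Variables (mul : T -> T -> T) (inv : T -> T).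
Hypotheses (mmul : measurable_fun setT (fun p : T * T => mul p.1 p.2))
  (minv : measurable_fun setT inv).
Hypotheses (invK : involutive inv)
  (invM : forall x y, inv (mul x y) = mul (inv y) (inv x)).
Variables (P : probability T R)
  (P_invl : forall g B, measurable B -> P (mul g @^-1` B) = P B).

Let inv_mulVl x y : inv (mul (inv x) y) = mul (inv y) x.
Proof. by rewrite invM invK. Qed.

Lemma measurable_mulr k : measurable_fun setT (mul^~ k).
Proof.
have -> : mul^~ k = (fun p : T * T => mul p.1 p.2) \o (fun x => (x, k)) by [].
exact: measurableT_comp mmul (measurable_fun_pair _ _).
Qed.

(* Fubini on [W = {(x, y) | mul (inv x) y \in B}]: every x-section of [W] has
   measure [P B] and every y-section has measure [P (inv @^-1` B)]. *)
Lemma probability_inv_preimage B : measurable B -> P (inv @^-1` B) = P B.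
Proof.
move=> mB; pose W := [set p : T * T | B (mul (inv p.1) p.2)].
have mW : measurable W.
  apply: (measurable_preimage
    (f := (fun p : T * T => mul p.1 p.2) \o (fun p => (inv p.1, p.2))) _ mB).
  apply: measurableT_comp mmul (measurable_fun_pair _ measurable_snd).
  exact: measurableT_comp minv measurable_fst.
have := integral_xsection_ysection P P mW.
rewrite (eq_integral (fun _ => P B)); last first.
  by move=> x _; rewrite xsectionE; exact: (P_invl (inv x) mB).
rewrite [X in _ = X -> _](eq_integral (fun _ => P (inv @^-1` B))); last first.
  move=> y _; rewrite ysectionE.
  have -> : (fun x => (x, y)) @^-1` W = mul (inv y) @^-1` (inv @^-1` B).
    by apply/funext => x; rewrite /W /= -inv_mulVl.
  exact/P_invl/measurable_preimage.
by rewrite !integral_cst_probability.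
Qed.

Lemma probability_mulr_preimage B k : measurable B -> P (mul^~ k @^-1` B) = P B.
Proof.
move=> mB; rewrite -probability_inv_preimage; last first.
  exact: measurable_preimage (measurable_mulr k) mB.
have -> : inv @^-1` (mul^~ k @^-1` B) = mul (inv k) @^-1` (inv @^-1` B).
  by apply/funext => x; rewrite /= -inv_mulVl.
by rewrite P_invl ?probability_inv_preimage //; exact: measurable_preimage.
Qed.

End left_invariant_probability.

Section group_and_action.
Context {R : realType} {N dh de : nat}.
Local Notation G := (G R N).
Local Notation M := (M R N dh de).

Lemma measurable_rot_entry i j : measurable_fun setT (fun g : G => (g.1 : 'M[R]_3) i j).
Proof.
by move=> _ U mU; rewrite setTI; apply: sub_sigma_algebra; left; exists i, j, U.
Qed.

Lemma measurable_perm_eq s : measurable [set g : G | g.2 = s].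
Proof. by apply: sub_sigma_algebra; right; exists s. Qed.

Lemma measurable_fun_grp d (T : measurableType d) (f : T -> G) :
  (forall i j, measurable_fun setT (fun x => ((f x).1 : 'M[R]_3) i j)) ->
  (forall s, measurable [set x | (f x).2 = s]) -> measurable_fun setT f.
Proof.
move=> mrot mperm; apply: (@measurability _ _ _ G _ _ (@grp_gen R N) erefl).
move=> _ [B [[i [j [U [mU ->]]]] | [s ->]] <-]; first exact: mrot.
by rewrite setTI; exact: mperm.
Qed.

Lemma measurable_molX i j : measurable_fun setT (fun Z : M => molX Z i j).
Proof.
by move=> _ U mU; rewrite setTI; apply: sub_sigma_algebra; left; exists i, j, U.
Qed.

Lemma measurable_molH i k : measurable_fun setT (fun Z : M => molH Z i k).
Proof.
move=> _ U mU; rewrite setTI; apply: sub_sigma_algebra; right; left.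
by exists i, k, U.
Qed.

Lemma measurable_molA i j k : measurable_fun setT (fun Z : M => molA Z i j k).
Proof.
move=> _ U mU; rewrite setTI; apply: sub_sigma_algebra; right; right.
by exists i, j, k, U.
Qed.

Lemma measurable_fun_mol d (T : measurableType d) (f : T -> M) :
  (forall i j, measurable_fun setT (fun x => molX (f x) i j)) ->
  (forall i k, measurable_fun setT (fun x => molH (f x) i k)) ->
  (forall i j k, measurable_fun setT (fun x => molA (f x) i j k)) ->
  measurable_fun setT f.
Proof.
move=> mX mH mA; apply: (@measurability _ _ _ M _ _ (@mol_gen R N dh de) erefl).
move=> _ [B [[i [j [U [mU ->]]]] | [[i [k [U [mU ->]]]] | [i [j [k [U [mU ->]]]]]]] <-].
- exact: mX.
- exact: mH.
- exact: mA.
Qed.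

Lemma so3_trP (a : SO3 R) :
  (((a : 'M[R]_3)^T) *m ((a : 'M[R]_3)^T)^T == 1%:M) && (\det ((a : 'M[R]_3)^T) == 1).
Proof.
move: a => [a /andP[/eqP aaT /eqP deta]] /=.
by rewrite trmxK (mulmx1C aaT) det_tr deta !eqxx.
Qed.

Definition so3_tr (a : SO3 R) : SO3 R := MkSO3 (so3_trP a).

Definition ginv (g : G) : G := (so3_tr g.1, (g.2)^-1%g).

Lemma so3_inj (a b : SO3 R) : (a : 'M[R]_3) = b -> a = b.
Proof.
by case: a b => [a aP] [b bP] /= ab; subst b; congr MkSO3; exact: bool_irrelevance.
Qed.

Lemma ginvK : involutive ginv.
Proof.
by case=> a s; rewrite /ginv /= invgK; congr (_, _); apply: so3_inj; rewrite /= trmxK.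
Qed.

Lemma ginvM g h : ginv (gmul g h) = gmul (ginv h) (ginv g).
Proof. by rewrite /ginv invMg; congr (_, _); apply: so3_inj; rewrite /= trmx_mul. Qed.

Lemma measurable_gmul : measurable_fun setT (fun p : G * G => gmul p.1 p.2).
Proof.
apply: measurable_fun_grp => [i j | s].
  under eq_fun do rewrite /= mxE.
  apply: measurable_sum => k; apply: measurable_funM.
    exact: measurableT_comp (measurable_rot_entry i k) measurable_fst.
  exact: measurableT_comp (measurable_rot_entry k j) measurable_snd.
have mpair t u : measurable ((fun p : G * G => (p.1.2, p.2.2)) @^-1` [set (t, u)]).
  have -> : (fun p : G * G => (p.1.2, p.2.2)) @^-1` [set (t, u)] =
            [set g : G | g.2 = t] `*` [set g : G | g.2 = u].
    by apply/seteqP; split => -[x y] /=; [case=> -> -> | case=> -> ->].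
  exact: measurableX (measurable_perm_eq t) (measurable_perm_eq u).
exact: (measurable_finite_preimage (q := fun p : G * G => (p.1.2, p.2.2)))
  (fun '(t, u) => mpair t u) [set tu | (tu.1 * tu.2)%g = s].
Qed.

Lemma measurable_ginv : measurable_fun setT ginv.
Proof.
apply: measurable_fun_grp => [i j | s].
  by under eq_fun do rewrite /= mxE; exact: measurable_rot_entry.
have -> : [set g : G | (ginv g).2 = s] = [set g : G | g.2 = s^-1%g].
  by apply/seteqP; split => g /= gs; [rewrite -gs | rewrite gs]; rewrite invgK.
exact: measurable_perm_eq.
Qed.

Lemma measurable_mol_act : measurable_fun setT (fun p : G * M => mol_act p.1 p.2).
Proof.
pose perm_of (p : G * M) := p.1.2.
have mperm s : measurable (perm_of @^-1` [set s]).
  exact: measurable_preimage measurable_fst (measurable_perm_eq s).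
apply: measurable_fun_mol => [i j | i k | i j k].
- apply: (measurable_fun_finite_cases mperm
    (fs := fun s p => \sum_l molX p.2 (s^-1%g i) l * (p.1.1 : 'M[R]_3) j l)).
    move=> s; apply: measurable_sum => l; apply: measurable_funM.
      exact: measurableT_comp (measurable_molX _ l) measurable_snd.
    exact: measurableT_comp (measurable_rot_entry j l) measurable_fst.
  by move=> p; rewrite /= !mxE; apply: eq_bigr => l _; rewrite mxE.
- apply: (measurable_fun_finite_cases mperm
    (fs := fun s p => molH p.2 (s^-1%g i) k)); last by move=> p; rewrite /= mxE.
  by move=> s; exact: measurableT_comp (measurable_molH _ k) measurable_snd.
- apply: (measurable_fun_finite_cases mperm
    (fs := fun s p => molA p.2 (s^-1%g i) (s^-1%g j) k)) => // s.
  exact: measurableT_comp (measurable_molA _ _ k) measurable_snd.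
Qed.

Lemma measurable_act_by (g : G) : measurable_fun setT (mol_act g : M -> M).
Proof.
have -> : mol_act g = (fun p : G * M => mol_act p.1 p.2) \o (fun Z => (g, Z)) by [].
exact: measurableT_comp measurable_mol_act (measurable_fun_pair _ _).
Qed.

Lemma measurable_act_at (Z : M) : measurable_fun setT (fun g : G => mol_act g Z).
Proof.
have -> : (fun g : G => mol_act g Z) =
          (fun p : G * M => mol_act p.1 p.2) \o (fun g => (g, Z)) by [].
exact: measurableT_comp measurable_mol_act (measurable_fun_pair _ _).
Qed.

Lemma mol_inj (Z1 Z2 : M) :
  molX Z1 = molX Z2 -> molH Z1 = molH Z2 -> molA Z1 = molA Z2 -> Z1 = Z2.
Proof.
case: Z1 Z2 => [X1 H1 A1 c1] [X2 H2 A2 c2] /= eX <- <-; subst X2.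
by congr Mol; exact: bool_irrelevance.
Qed.

(* Since [permM : (s * t) x = t (s x)], the permutation factor of [mol_act]
   composes in the opposite order to the rotation factor. *)
Lemma mol_act_comp (g h : G) (Z : M) :
  mol_act g (mol_act h Z) = mol_act (gmul (gmul (so3_one R, h.2) g) (h.1, 1%g)) Z.
Proof.
have permE i : ((h.2 * g.2 * 1)^-1)%g i = (h.2^-1)%g ((g.2^-1)%g i).
  by rewrite mulg1 invMg permM.
apply: mol_inj => /=.
- apply/matrixP => i j.
  rewrite [LHS]mxE [RHS]mxE permE mul1mx trmx_mul mulmxA [LHS]mxE [RHS]mxE.
  by apply: eq_bigr => k _; rewrite mxE.
- by apply/matrixP => i k; rewrite !mxE permE.
- by apply/funext => i; apply/funext => j; rewrite !permE.
Qed.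

End group_and_action.

Section haar_randomization.
Local Open Scope ereal_scope.
Variables (R : realType) (N dh de : nat).
Local Notation G := (G R N).
Local Notation M := (M R N dh de).
Variables (lam : probability G R) (hlam : left_invariant lam).

Let measurable_hit (A : set M) : measurable A ->
  measurable [set p : G * M | A (mol_act p.1 p.2)].
Proof. by move=> mA; have := measurable_preimage measurable_mol_act mA. Qed.

Lemma haar_orbit_invariant (A : set M) (h : G) (Z : M) : measurable A ->
  lam [set g | A (mol_act g (mol_act h Z))] = lam [set g | A (mol_act g Z)].
Proof.
move=> mA; under eq_set do rewrite mol_act_comp.
(* A translation on both sides: right invariance of [lam] is needed here. *)
have -> : [set g | A (mol_act (gmul (gmul (so3_one R, h.2) g) (h.1, 1%g)) Z)] =
    gmul (so3_one R, h.2) @^-1`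
      ((fun g => gmul g (h.1, 1%g)) @^-1` [set g | A (mol_act g Z)]).
  by [].
have mAZ := measurable_preimage (measurable_act_at Z) mA.
have invr := probability_mulr_preimage measurable_gmul measurable_ginv ginvK ginvM hlam.
rewrite hlam ?invr //.
exact: measurable_preimage (measurable_mulr measurable_gmul _) mAZ.
Qed.

Lemma haar_randomizeE (P : probability M R) (A : set M) : measurable A ->
  haar_randomize lam P A = \int[lam]_g P (mol_act g @^-1` A).
Proof.
move=> mA; have := integral_xsection_ysection lam P (measurable_hit mA).
by rewrite /haar_randomize; under eq_integral do rewrite xsectionE;
  under [X in _ = X -> _]eq_integral do rewrite ysectionE.
Qed.

Lemma haar_randomize_TV_le (P Q : probability M R) :
  TV (haar_randomize lam P) (haar_randomize lam Q) <= TV P Q.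
Proof.
apply: ge_ereal_sup => _ [A mA <-]; rewrite !haar_randomizeE //.
have integrable_act (S : probability M R) :
    lam.-integrable setT (fun g => S (mol_act g @^-1` A)).
  have := integrable_probability_xsection lam S (measurable_hit mA).
  by under eq_fun do rewrite xsectionE.
apply: abse_integralB_le; [exact: integrable_act|exact: integrable_act|].
move=> g; apply: ereal_sup_ubound; exists (mol_act g @^-1` A) => //.
exact: measurable_preimage (measurable_act_by g) mA.
Qed.

Lemma haar_randomize_canonical (mu : probability M R) (Psi : {mfun M >-> M})
    (D : set M) :
  G_invariant mu -> measurable D -> mu (~` D) = 0 ->
  (forall Z, D Z -> exists h : G, Psi Z = mol_act h Z) ->
  forall A, measurable A ->
  haar_randomize lam (distribution mu Psi) A = mu A.
Proof.
move=> hmu mD muDC Psi_orbit A mA.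
have mhit : measurable_fun setT (fun Z => lam [set g | A (mol_act g Z)]).
  have := measurable_fun_ysection lam (measurable_hit mA).
  by rewrite /comp; under eq_fun do rewrite ysectionE.
rewrite /haar_randomize ge0_integral_pushforward //= preimage_setT.
transitivity (haar_randomize lam mu A).
  apply: ae_eq_integral => //; first exact: measurableT_comp mhit _.
  exists (~` D); split => //; first exact: measurableC.
  move=> Z /= nPZ DZ; apply: nPZ => _; have [h ->] := Psi_orbit Z DZ.
  exact: haar_orbit_invariant.
rewrite haar_randomizeE // -[RHS](integral_cst_probability lam).
by apply: eq_integral => g _; rewrite hmu.
Qed.

End haar_randomization.

Theorem mainTheorem3 (R : realType) (N dh de : nat)
  (hN : (1 <= N)%N) (hdh : (1 <= dh)%N) (hde : (1 <= de)%N)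
  (lam : probability (G R N) R) (hlam : left_invariant lam)
  (mu : probability (M R N dh de) R) (hmu : G_invariant mu)
  (hstab : {ae mu, forall Z : M R N dh de, forall g : G R N, mol_act g Z = Z -> g = gone})
  (Psi : M R N dh de -> M R N dh de) (mPsi : measurable_fun setT Psi)
  (D : set (M R N dh de)) (mD : measurable D) (hD : mu (~` D) = 0%E)
  (D_inv : forall (g : G R N) Z, D Z -> D (mol_act g Z))
  (Psi_orbit : forall Z, D Z -> exists g : G R N, Psi Z = mol_act g Z)
  (Psi_inv : forall (g : G R N) Z, D Z -> Psi (mol_act g Z) = Psi Z)
  (eps : R) (heps : 0 < eps)
  (mueq : probability (M R N dh de) R) (hmueq : G_invariant mueq)
  (hTV : (TV mueq mu < eps%:E)%E)
  (Theta : Type) (nut : Theta -> probability (M R N dh de) R)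
  (nut_S : forall t B, measurable B -> Psi @` D `<=` B -> nut t B = 1%E)
  (hinf : (ereal_inf (range (fun t => TV (nut t) (pushforward mu Psi)))
           <= TV (pushforward mueq Psi) (pushforward mu Psi))%E) :
  exists t : Theta, (TV (haar_randomize lam (nut t)) mu < eps%:E)%E.
Proof.
pose Psi' : {mfun _ >-> _} := HB.pack Psi (isMeasurableFun.Build _ _ _ _ _ mPsi).
have TV_canonical : (TV (distribution mueq Psi') (distribution mu Psi') < eps%:E)%E.
  exact: le_lt_trans (TV_pushforward_le _ _ mPsi) hTV.
have [_ [t _ <-] ht] := ereal_inf_lt (le_lt_trans hinf TV_canonical).
exists t.
rewrite -(eq_TVr _ (haar_randomize_canonical hlam (Psi := Psi') hmu mD hD Psi_orbit)).
exact: le_lt_trans (haar_randomize_TV_le lam (nut t) (distribution mu Psi')) ht.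
Qed.
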